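(* The set $\mathcal S(X)$ of skew-convex functions $X\to K$, equipped with pointwise addition and the skew product $\diamond$, is a ring with identity (the constant function $1$).
   Context: Let $K$ be a skew field, $K^*=K\setminus\{0\}$, and let $X$ be a nonempty set on which $K^*$ acts on the left, written $(a,x)\mapsto{}^{a}x$. $\mathcal F(X)$ is the set of all functions $X\to K$ with pointwise addition; the constant function with value $a\in K$ is denoted $a$. The skew product of $f,g\in\mathcal F(X)$ is $(f\diamond g)(x)=f({}^{g(x)}x)\,g(x)$ if $g(x)\neq0$ and $0$ if $g(x)=0$. A function $f\in\mathcal F(X)$ is skew convex if $f\diamond(a+b)=f\diamond a+f\diamond b$ for all $a,b\in K$ (viewed as constant functions). $\mathcal S(X)$ denotes the set of skew-convex functions. *)

From HB Require Import structures.
From mathcomp Require Import all_boot all_algebra.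
Set Implicit Arguments. Unset Strict Implicit. Unset Printing Implicit Defensive.
Import GRing.Theory.
Local Open Scope ring_scope.

Definition skew_field (K : unitRingType) : Prop :=
  forall a : K, a != 0 -> a \is a GRing.unit.

(* A left action of K^* = K \ {0} on X, given by act : K -> X -> X
   (the values of act at 0 are irrelevant). *)
Definition left_action_Kstar (K : unitRingType) (X : Type) (act : K -> X -> X) : Prop :=
  (forall x, act 1 x = x) /\
  (forall a b x, a != 0 -> b != 0 -> act (a * b) x = act a (act b x)).

Section Skew.
Variables (K : unitRingType) (X : Type) (act : K -> X -> X).

Definition fadd (f g : X -> K) : X -> K := fun x => f x + g x.
Definition fopp (f : X -> K) : X -> K := fun x => - f x.
Definition fconst (a : K) : X -> K := fun _ => a.

Definition skew_prod (f g : X -> K) : X -> K :=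
  fun x => if g x == 0 then 0 else f (act (g x) x) * g x.

Definition skew_convex (f : X -> K) : Prop :=
  forall a b : K, skew_prod f (fconst (a + b)) =
                  fadd (skew_prod f (fconst a)) (skew_prod f (fconst b)).
End Skew.

Definition ring_with_identity_on (T : Type) (P : T -> Prop)
  (add : T -> T -> T) (opp : T -> T) (zero : T) (mul : T -> T -> T) (one : T) : Prop :=
  P zero /\ P one /\
  (forall f g, P f -> P g -> P (add f g)) /\
  (forall f, P f -> P (opp f)) /\
  (forall f g, P f -> P g -> P (mul f g)) /\
  (forall f g h, P f -> P g -> P h -> add f (add g h) = add (add f g) h) /\
  (forall f g, P f -> P g -> add f g = add g f) /\
  (forall f, P f -> add zero f = f) /\
  (forall f, P f -> add (opp f) f = zero) /\
  (forall f g h, P f -> P g -> P h -> mul f (mul g h) = mul (mul f g) h) /\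
  (forall f, P f -> mul one f = f) /\
  (forall f, P f -> mul f one = f) /\
  (forall f g h, P f -> P g -> P h -> mul f (add g h) = add (mul f g) (mul f h)) /\
  (forall f g h, P f -> P g -> P h -> mul (add f g) h = add (mul f h) (mul g h)).

(* All additive structure of F(X) = X -> K is pointwise, so the abelian group
   laws are inherited from K.  For the skew product we show, for arbitrary
   f, g, h in F(X):
   - right distributivity and compatibility with negation, since
     (f ⋄ h)(x) is linear in f once h is fixed;
   - the constant 1 is a two-sided unit (using that 1 acts trivially);
   - associativity, using that the action is compatible with multiplication
     and that, in a skew field, a product of nonzero elements is nonzero;
   - left distributivity f ⋄ (u + v) = f ⋄ u + f ⋄ v for skew-convex f,
     because (f ⋄ u)(x) only depends on the value u(x), so the identity for
     constants applies pointwise. *)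

From Stdlib Require Import FunctionalExtensionality.
From mathcomp Require Import all_boot all_algebra.
Import GRing.Theory.
Local Open Scope ring_scope.

Lemma skew_field_mul_neq0 {K : unitRingType} :
  skew_field K -> forall a b : K, a != 0 -> b != 0 -> a * b != 0.
Proof.
move=> hK a b a0 b0.
have : a * b \is a GRing.unit by rewrite unitrMl; apply: hK.
by apply: contraTneq => ->; rewrite unitr0.
Qed.

Section SkewProduct.
Variables (K : unitRingType) (X : Type) (act : K -> X -> X).
Hypothesis hK : skew_field K.
Hypothesis hact : left_action_Kstar act.

Local Notation "f ⋄ g" := (skew_prod act f g) (at level 40, left associativity).

Lemma faddA (f g h : X -> K) : fadd f (fadd g h) = fadd (fadd f g) h.
Proof. by apply: functional_extensionality => x; rewrite /fadd addrA. Qed.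

Lemma faddC (f g : X -> K) : fadd f g = fadd g f.
Proof. by apply: functional_extensionality => x; rewrite /fadd addrC. Qed.

Lemma fadd0 (f : X -> K) : fadd (@fconst K X 0) f = f.
Proof. by apply: functional_extensionality => x; rewrite /fadd add0r. Qed.

Lemma faddN (f : X -> K) : fadd (fopp f) f = @fconst K X 0.
Proof. by apply: functional_extensionality => x; rewrite /fadd addNr. Qed.

Lemma faddACA (f g h k : X -> K) :
  fadd (fadd f g) (fadd h k) = fadd (fadd f h) (fadd g k).
Proof. by apply: functional_extensionality => x; rewrite /fadd addrACA. Qed.

Lemma foppD (f g : X -> K) : fopp (fadd f g) = fadd (fopp f) (fopp g).
Proof. by apply: functional_extensionality => x; rewrite /fadd /fopp opprD. Qed.

Lemma skew_prod_at (f g : X -> K) (x : X) : (f ⋄ g) x = (f ⋄ @fconst K X (g x)) x.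
Proof. by []. Qed.

Lemma skew_prodDl (f g h : X -> K) : fadd f g ⋄ h = fadd (f ⋄ h) (g ⋄ h).
Proof.
apply: functional_extensionality => x; rewrite /skew_prod /fadd.
by case: (h x == 0); rewrite ?addr0 ?mulrDl.
Qed.

Lemma skew_prodNl (f g : X -> K) : fopp f ⋄ g = fopp (f ⋄ g).
Proof.
apply: functional_extensionality => x; rewrite /skew_prod /fopp.
by case: (g x == 0); rewrite ?oppr0 ?mulNr.
Qed.

Lemma skew_prod0l (g : X -> K) : @fconst K X 0 ⋄ g = @fconst K X 0.
Proof.
apply: functional_extensionality => x; rewrite /skew_prod /fconst mul0r.
by case: (g x == 0).
Qed.

Lemma skew_prod1l (f : X -> K) : @fconst K X 1 ⋄ f = f.
Proof.
apply: functional_extensionality => x; rewrite /skew_prod /fconst mul1r.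
by case: eqP.
Qed.

(* Right unit: the identity 1 of K acts trivially on X. *)
Lemma skew_prod1r (f : X -> K) : f ⋄ @fconst K X 1 = f.
Proof.
apply: functional_extensionality => x.
by rewrite /skew_prod /fconst oner_eq0 mulr1 (proj1 hact).
Qed.

(* Associativity: when h x and g (h x . x) are nonzero, so is their product,
   and acting by it is acting by h x, then by g (h x . x). *)
Lemma skew_prodA (f g h : X -> K) : f ⋄ (g ⋄ h) = (f ⋄ g) ⋄ h.
Proof.
apply: functional_extensionality => x; rewrite /skew_prod.
have [hx0|hx0] := eqVneq (h x) 0; first by rewrite eqxx.
have [gx0|gx0] := eqVneq (g (act (h x) x)) 0; first by rewrite gx0 mul0r eqxx.
rewrite (negbTE (skew_field_mul_neq0 hK _ _ gx0 hx0)) mulrA.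
by rewrite (proj2 hact _ _ _ gx0 hx0).
Qed.

(* Left distributivity holds for skew-convex f, applying convexity at the
   constants u x and v x. *)
Lemma skew_prodDr (f u v : X -> K) :
  skew_convex act f -> f ⋄ fadd u v = fadd (f ⋄ u) (f ⋄ v).
Proof.
move=> cf; apply: functional_extensionality => x.
rewrite /fadd skew_prod_at (skew_prod_at f u) (skew_prod_at f v).
exact: (f_equal (fun F => F x) (cf (u x) (v x))).
Qed.

Lemma skew_convex0 : skew_convex act (@fconst K X 0).
Proof. by move=> a b; rewrite !skew_prod0l fadd0. Qed.

Lemma skew_convex1 : skew_convex act (@fconst K X 1).
Proof. by move=> a b; rewrite !skew_prod1l. Qed.

Lemma skew_convexD (f g : X -> K) :
  skew_convex act f -> skew_convex act g -> skew_convex act (fadd f g).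
Proof. by move=> cf cg a b; rewrite !skew_prodDl cf cg faddACA. Qed.

Lemma skew_convexN (f : X -> K) :
  skew_convex act f -> skew_convex act (fopp f).
Proof. by move=> cf a b; rewrite !skew_prodNl cf foppD. Qed.

Lemma skew_convexM (f g : X -> K) :
  skew_convex act f -> skew_convex act g -> skew_convex act (f ⋄ g).
Proof. by move=> cf cg a b; rewrite -!skew_prodA cg skew_prodDr. Qed.

End SkewProduct.

Theorem theorem2p4 (K : unitRingType) (X : Type) (act : K -> X -> X) :
  skew_field K -> inhabited X -> left_action_Kstar act ->
  ring_with_identity_on (skew_convex act)
    (@fadd K X) (@fopp K X) (@fconst K X 0) (skew_prod act) (@fconst K X 1).
Proof.
move=> hK _ hact; repeat split.
- exact: skew_convex0.
- exact: skew_convex1.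
- exact: skew_convexD.
- exact: skew_convexN.
- exact: skew_convexM.
- by move=> f g h _ _ _; apply: faddA.
- by move=> f g _ _; apply: faddC.
- by move=> f _; apply: fadd0.
- by move=> f _; apply: faddN.
- by move=> f g h _ _ _; apply: skew_prodA.
- by move=> f _; apply: skew_prod1l.
- by move=> f _; apply: skew_prod1r.
- by move=> f g h cf _ _; apply: skew_prodDr.
- by move=> f g h _ _ _; apply: skew_prodDl.
Qed.
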